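(* Let $F=F(a,b)$ be the free group on generators $a,b$. For every $n\ge 1$, $$[[a,_{2n}b],a]\equiv\Big[\prod_{i=0}^{n-1}\big[[a,_{2n-1-i}b],[a,_ib]\big]^{(-1)^i},\ b\Big]\mod\gamma_{2n+3}(F).$$
   Context: For group elements, $[x,y]=x^{-1}y^{-1}xy$; commutators are left-normalized, $[x_1,\dots,x_n]=[[x_1,\dots,x_{n-1}],x_n]$, and $[x,_0y]=x$, $[x,_{i+1}y]=[[x,_iy],y]$. $\gamma_k(F)$ is the lower central series: $\gamma_1(F)=F$, $\gamma_{k+1}(F)=[\gamma_k(F),F]$. *)

From mathcomp Require Import all_boot.

Set Implicit Arguments.
Unset Strict Implicit.
Unset Printing Implicit Defensive.

(* A letter: (generator, inverted?) ; generator false = a, true = b. *)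
Definition letter := (bool * bool)%type.
Definition lflip (l : letter) : letter := (l.1, ~~ l.2).

Definition reduced (w : seq letter) : bool :=
  if w is x :: s then path (fun x y => y != lflip x) x s else true.

Definition push (l : letter) (w : seq letter) : seq letter :=
  if w is y :: s then (if y == lflip l then s else l :: w) else [:: l].

Lemma reduced_push l w : reduced w -> reduced (push l w).
Proof.
case: w => [|y s] //=.
case: eqP => [_|ne] /=.
  by case: s => [|z s] //= /andP[].
by move=> p; rewrite p andbT; apply/eqP.
Qed.

Definition FG := {w : seq letter | reduced w}.

Definition fg_mul_word (u v : seq letter) := foldr push v u.
Lemma reduced_mul u v : reduced v -> reduced (fg_mul_word u v).
Proof. by elim: u => [|l u IH] //= rv; apply: reduced_push; apply: IH. Qed.
Definition fg_mul (x y : FG) : FG :=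
  exist _ (fg_mul_word (proj1_sig x) (proj1_sig y)) (reduced_mul _ (proj2_sig y)).

Definition fg_inv_word (u : seq letter) :=
  foldl (fun acc l => push (lflip l) acc) [::] u.
Lemma reduced_inv u : reduced (fg_inv_word u).
Proof.
rewrite /fg_inv_word; have : reduced [::] by [].
elim: u [::] => [|l u IH] acc //= r; apply: IH; exact: reduced_push.
Qed.
Definition fg_inv (x : FG) : FG := exist _ (fg_inv_word (proj1_sig x)) (reduced_inv _).

Definition fg_one : FG := exist _ [::] isT.
Definition fg_a : FG := exist _ [:: (false, false)] isT.
Definition fg_b : FG := exist _ [:: (true, false)] isT.

Definition fg_comm (x y : FG) : FG :=
  fg_mul (fg_inv x) (fg_mul (fg_inv y) (fg_mul x y)).

Definition fg_citer (i : nat) (x y : FG) : FG := iter i (fun z => fg_comm z y) x.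

Inductive fg_gen (P : FG -> Prop) : FG -> Prop :=
  | fg_gen_base x : P x -> fg_gen P x
  | fg_gen_one : fg_gen P fg_one
  | fg_gen_mul x y : fg_gen P x -> fg_gen P y -> fg_gen P (fg_mul x y)
  | fg_gen_inv x : fg_gen P x -> fg_gen P (fg_inv x).

(* Lower central series: gamma_1(F) = F, gamma_(k+1)(F) = [gamma_k(F), F]
   (the subgroup generated by the commutators [x,y], x in gamma_k(F), y in F).
   gamma_0 is set to F by convention (unused). *)
Fixpoint fg_gamma (k : nat) : FG -> Prop :=
  match k with
  | 0 => fun _ => True
  | 1 => fun _ => True
  | S k' => fg_gen (fun z => exists x y, fg_gamma k' x /\ z = fg_comm x y)
  end.

Definition fg_congr (k : nat) (x y : FG) : Prop := fg_gamma k (fg_mul (fg_inv x) y).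

Definition fg_prod (n : nat) (f : nat -> FG) : FG :=
  foldr (fun i acc => fg_mul (f i) acc) fg_one (iota 0 n).

Definition fg_sgnpow (i : nat) (x : FG) : FG := if odd i then fg_inv x else x.

From HB Require Import structures.
From mathcomp Require Import all_boot zify.

Set Implicit Arguments.
Unset Strict Implicit.
Unset Printing Implicit Defensive.

(* Write c_i for [a,_i b]. Modulo gamma_(p+q+2), commutation with b acts on
   [gamma_p, gamma_q] as a derivation, [[x,y],b] = [x,[y,b]] [[x,b],y], and it
   is multiplicative on gamma_k modulo gamma_(k+2). Hence, modulo gamma_(2n+3),
   [[c_(2n-1-i), c_i], b] = A_i B_i with A_i = [c_(2n-1-i), c_(i+1)] and
   B_i = [c_(2n-i), c_i] = A_(i-1), so the alternating product telescopes to
   B_0 A_(n-1)^(+-1) = [c_(2n), a] [c_n, c_n]^(+-1) = [c_(2n), a]. Nothing here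
   is specific to the free group: the congruence holds in every group. *)

Local Open Scope group_scope.

Section CommutatorIdentities.

Variable G : groupType.
Implicit Types x y z : G.

Lemma conjg_mulR x y : x ^ y = x * [~ x, y].
Proof. by rewrite mulVKg. Qed.

Lemma commMgJ x y z : [~ x * y, z] = [~ x, z] ^ y * [~ y, z].
Proof. by rewrite /commg /conjg !invgM ?invgK !mulgA ?(mulgK, mulgVK). Qed.

Lemma commgMJ x y z : [~ x, y * z] = [~ x, z] * [~ x, y] ^ z.
Proof. by rewrite /commg /conjg !invgM ?invgK !mulgA ?(mulgK, mulgVK). Qed.

Lemma commVgJ x y : [~ x^-1, y] = ([~ x, y] ^ x^-1)^-1.
Proof. by apply: (@mulgI _ ([~ x, y] ^ x^-1)); rewrite mulgV -commMgJ mulgV comm1g. Qed.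

Lemma commgVJ x y : [~ x, y^-1] = ([~ x, y] ^ y^-1)^-1.
Proof. by apply: (@mulIg _ ([~ x, y] ^ y^-1)); rewrite /= mulVg -commgMJ mulgV commg1. Qed.

Lemma Hall_Witt_identity x y z :
  [~ x, y^-1, z] ^ y * [~ y, z^-1, x] ^ z * [~ z, x^-1, y] ^ x = 1.
Proof. by rewrite /commg /conjg !invgM ?invgK !mulgA ?(mulgK, mulgVK) mulVg. Qed.

End CommutatorIdentities.

Section LowerCentralSeries.

Variable G : groupType.
Implicit Types x y z g : G.

Inductive generated (P : G -> Prop) : G -> Prop :=
  | generated_base x : P x -> generated P x
  | generated1 : generated P 1
  | generatedM x y : generated P x -> generated P y -> generated P (x * y)
  | generatedV x : generated P x -> generated P x^-1.

Fixpoint lcs (k : nat) : G -> Prop :=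
  match k with
  | 0 | 1 => fun _ => True
  | k'.+1 => generated (fun z => exists x y, lcs k' x /\ z = [~ x, y])
  end.

Lemma lcsSn k : lcs k.+2 = generated (fun z => exists x y, lcs k.+1 x /\ z = [~ x, y]).
Proof. by []. Qed.

Lemma lcs1 k : lcs k 1.
Proof. by case: k => [|[|k]] //; apply: generated1. Qed.

Lemma lcsM k x y : lcs k x -> lcs k y -> lcs k (x * y).
Proof. by case: k => [|[|k]] //; apply: generatedM. Qed.

Lemma lcsV k x : lcs k x -> lcs k x^-1.
Proof. by case: k => [|[|k]] //; apply: generatedV. Qed.

Lemma lcsR k x y : 0 < k -> lcs k x -> lcs k.+1 [~ x, y].
Proof. by case: k => [|k] // _ kx; apply: generated_base; exists x, y. Qed.

Lemma lcsJ k x g : lcs k x -> lcs k (x ^ g).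
Proof.
case: k => [|[|k]] // kx; elim: kx => {x} [_ [x [y [kx ->]]] | | x y _ IHx _ IHy | x _ IHx].
- rewrite -[_ ^ g](mulKg [~ x, g]) -commgMJ.
  by apply: lcsM; [apply: lcsV|]; apply: lcsR.
- by rewrite conj1g; apply: lcs1.
- by rewrite conjMg; apply: lcsM.
- by rewrite conjVg; apply: lcsV.
Qed.

Lemma lcs_subS k x : lcs k.+1 x -> lcs k x.
Proof.
case: k => [|k] // kx; elim: kx => {x} [_ [x [y [kx ->]]] | | x y _ IHx _ IHy | x _ IHx].
- by rewrite commgEl; apply: lcsM; [apply: lcsV | apply: lcsJ].
- exact: lcs1.
- exact: lcsM.
- exact: lcsV.
Qed.

Lemma lcs_sub_leq m n x : n <= m -> lcs m x -> lcs n x.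
Proof. by move/subnK <-; elim: (m - n) => // d IHd /lcs_subS. Qed.

Lemma lcs_commg i j x w : 0 < i -> 0 < j -> lcs i x -> lcs j w -> lcs (i + j) [~ x, w].
Proof.
elim: j i x w => [|j IHj] i x w // i_gt0 _ ix.
case: j IHj => [|j] IHj; first by rewrite addn1 => _; apply: lcsR.
rewrite lcsSn; elim=> {w} [_ [y [u [jy ->]]] | | w1 w2 _ IH1 _ IH2 | w _ IHw].
- have hw := Hall_Witt_identity y u^-1 x; rewrite invgK in hw.
  set A := _ ^ u^-1 in hw; set B := _ ^ x in hw; set C := _ ^ y in hw.
  have kC : lcs (i + j.+2) C.
    apply: lcsJ; rewrite addnS; apply: lcsR; first by rewrite addnS.
    by apply: IHj => //; apply: lcsV.
  have kB : lcs (i + j.+2) B.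
    apply: lcsJ; rewrite -addSnnS; apply: IHj => //.
    by rewrite -invgR; apply: lcsV; apply: lcsR => //; apply: lcsV.
  have kA : lcs (i + j.+2) A.
    have -> : A = (B * C)^-1 by apply: (@mulIg _ (B * C)); rewrite mulVg mulgA hw.
    by apply: lcsV; apply: lcsM.
  rewrite -invgR; apply: lcsV.
  by rewrite -(conjgKV u [~ y, u, x]); apply: lcsJ.
- by rewrite commg1; apply: lcs1.
- by rewrite commgMJ; apply: lcsM => //; apply: lcsJ.
- by rewrite commgVJ; apply/lcsV/lcsJ.
Qed.

Lemma lcs_prod k (I : eqType) (r : seq I) (F : I -> G) :
  {in r, forall i, lcs k (F i)} -> lcs k (\prod_(i <- r) F i).
Proof. by move=> kF; rewrite big_seq; apply: big_ind => //; [apply: lcs1 | apply: lcsM]. Qed.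

End LowerCentralSeries.

Section CongruenceModuloLcs.

Variable G : groupType.
Implicit Types x y z g b : G.

Definition congr_lcs k x y := lcs k (x^-1 * y).

Lemma congr_lcs_refl k x : congr_lcs k x x.
Proof. by rewrite /congr_lcs mulVg; apply: lcs1. Qed.

Lemma congr_lcs_sym k x y : congr_lcs k x y -> congr_lcs k y x.
Proof. by rewrite /congr_lcs => /lcsV; rewrite invgM invgK. Qed.

Lemma congr_lcs_trans k y x z : congr_lcs k x y -> congr_lcs k y z -> congr_lcs k x z.
Proof. by move=> kxy kyz; have := lcsM kxy kyz; rewrite mulgA mulgK. Qed.

Lemma congr_lcsM k x1 x2 y1 y2 :
  congr_lcs k x1 x2 -> congr_lcs k y1 y2 -> congr_lcs k (x1 * y1) (x2 * y2).
Proof.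
move=> kx ky; have := lcsM (lcsJ y1 kx) ky.
by rewrite /congr_lcs /conjg invgM !mulgA mulgK.
Qed.

Lemma congr_lcsV k x y : congr_lcs k x y -> congr_lcs k x^-1 y^-1.
Proof.
move=> kxy; have := lcsJ x^-1 (lcsV kxy).
by rewrite /congr_lcs /conjg invgM !invgK !mulgA mulgK.
Qed.

Lemma lcs_congr1 k x : lcs k x -> congr_lcs k x 1.
Proof. by rewrite /congr_lcs mulg1; apply: lcsV. Qed.

Lemma congr_lcs_conjg k i j x g : 0 < i -> 0 < j -> k <= i + j ->
  lcs i x -> lcs j g -> congr_lcs k x (x ^ g).
Proof. by move=> i_gt0 j_gt0 le_k ix jg; apply: (lcs_sub_leq le_k); apply: lcs_commg. Qed.

Lemma congr_lcs_commute k i j x g : 0 < i -> 0 < j -> k <= i + j ->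
  lcs i x -> lcs j g -> congr_lcs k (x * g) (g * x).
Proof.
move=> i_gt0 j_gt0 le_k ix jg; rewrite /congr_lcs invgM -mulgA.
by rewrite addnC in le_k; apply: (lcs_sub_leq le_k); apply: lcs_commg.
Qed.

Lemma congr_lcs_prod k (I : eqType) (r : seq I) (F H : I -> G) :
  {in r, forall i, congr_lcs k (F i) (H i)} ->
  congr_lcs k (\prod_(i <- r) F i) (\prod_(i <- r) H i).
Proof.
elim: r => [|i r IHr] FH; first by rewrite !big_nil; apply: congr_lcs_refl.
rewrite !big_cons; apply: congr_lcsM; first by apply: FH; rewrite mem_head.
by apply: IHr => j rj; apply: FH; rewrite inE rj orbT.
Qed.

Lemma commg_leibniz p q x y b : 0 < p -> 0 < q -> lcs p x -> lcs q y ->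
  congr_lcs (p + q + 2) [~ x, y, b] ([~ x, [~ y, b]] * [~ x, b, y]).
Proof.
move=> p_gt0 q_gt0 px qy.
set u := [~ x, b]; set v := [~ y, b].
set X := [~ x, v]; set Y := [~ x, y]; set Z := [~ u, y]; set W := [~ u, v].
have -> : [~ x, y, b] = Y^-1 * ((X * Y ^ v) ^ u * (W * Z ^ v)).
  by rewrite commgEl conjRg (conjg_mulR x) (conjg_mulR y) commMgJ (commgMJ x) (commgMJ u).
have pu : lcs p.+1 u by apply: lcsR.
have qv : lcs q.+1 v by apply: lcsR.
have kY : lcs (p + q) Y by apply: lcs_commg.
have kX : lcs (p + q).+1 X by rewrite -addnS; apply: lcs_commg.
have kZ : lcs (p + q).+1 Z by rewrite -addSn; apply: lcs_commg.
have kW : lcs (p + q + 2) W.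
  have -> : p + q + 2 = p.+1 + q.+1 by lia.
  exact: lcs_commg.
have YJ : congr_lcs (p + q + 2) (Y ^ v) Y.
  by apply: congr_lcs_sym; apply: (congr_lcs_conjg (i := p + q) (j := q.+1)) => //; lia.
have XYJ : congr_lcs (p + q + 2) ((X * Y ^ v) ^ u) (X * Y).
  apply: congr_lcs_trans (congr_lcsM (congr_lcs_refl _ X) YJ).
  apply: congr_lcs_sym; apply: (congr_lcs_conjg (i := p + q) (j := p.+1)) => //; try lia.
  by apply: lcsM; [apply: lcs_subS | apply: lcsJ].
have WZJ : congr_lcs (p + q + 2) (W * Z ^ v) Z.
  rewrite -[X in congr_lcs _ _ X]mul1g; apply: congr_lcsM; first exact: lcs_congr1.
  by apply: congr_lcs_sym; apply: (congr_lcs_conjg (i := (p + q).+1) (j := q.+1)) => //; lia.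
have XJ : congr_lcs (p + q + 2) (Y^-1 * (X * Y)) X.
  by apply: congr_lcs_sym; apply: (congr_lcs_conjg (i := (p + q).+1) (j := p + q)) => //; lia.
rewrite mulgA; apply: congr_lcsM WZJ; apply: congr_lcs_trans XJ.
exact: congr_lcsM (congr_lcs_refl _ _) XYJ.
Qed.

Definition sgnpowg (i : nat) x := if odd i then x^-1 else x.

Lemma lcs_sgnpowg k i x : lcs k x -> lcs k (sgnpowg i x).
Proof. by rewrite /sgnpowg; case: (odd i) => //; apply: lcsV. Qed.

Lemma congr_lcs_sgnpowg k i x y :
  congr_lcs k x y -> congr_lcs k (sgnpowg i x) (sgnpowg i y).
Proof. by rewrite /sgnpowg; case: (odd i) => //; apply: congr_lcsV. Qed.

Lemma commVg_congr k x b : 0 < k -> lcs k x -> congr_lcs (k + 2) [~ x^-1, b] [~ x, b]^-1.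
Proof.
move=> k_gt0 kx; rewrite commVgJ; apply/congr_lcsV/congr_lcs_sym.
by apply: (congr_lcs_conjg (i := k.+1) (j := k)) => //; [lia | apply: lcsR | apply: lcsV].
Qed.

Lemma commg_sgnpowg_congr k i x b : 0 < k -> lcs k x ->
  congr_lcs (k + 2) [~ sgnpowg i x, b] (sgnpowg i [~ x, b]).
Proof.
rewrite /sgnpowg; case: (odd i) => k_gt0 kx; last exact: congr_lcs_refl.
exact: commVg_congr.
Qed.

Lemma commg_sgnpowg_leibniz p q i x y b : 0 < p -> 0 < q -> lcs p x -> lcs q y ->
  congr_lcs (p + q + 2) [~ sgnpowg i [~ x, y], b]
                        (sgnpowg i ([~ x, [~ y, b]] * [~ x, b, y])).
Proof.
move=> p_gt0 q_gt0 px qy.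
have pq_gt0 : 0 < p + q by rewrite addn_gt0 p_gt0.
apply: congr_lcs_trans (commg_sgnpowg_congr i b pq_gt0 (lcs_commg p_gt0 q_gt0 px qy)) _.
exact/congr_lcs_sgnpowg/commg_leibniz.
Qed.

Lemma commg_prod_congr k (I : eqType) (r : seq I) (F : I -> G) b :
  0 < k -> {in r, forall i, lcs k (F i)} ->
  congr_lcs (k + 2) [~ \prod_(i <- r) F i, b] (\prod_(i <- r) [~ F i, b]).
Proof.
move=> k_gt0; elim: r => [|i r IHr] kF.
  by rewrite !big_nil comm1g; apply: congr_lcs_refl.
have kFr : {in r, forall j, lcs k (F j)} by move=> j rj; apply: kF; rewrite inE rj orbT.
rewrite !big_cons commMgJ; apply: congr_lcsM (IHr kFr); apply: congr_lcs_sym.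
apply: (congr_lcs_conjg (i := k.+1) (j := k)) => //; first lia.
  by apply: lcsR => //; apply: kF; rewrite mem_head.
exact: lcs_prod.
Qed.

(* Consecutive factors cancel exactly up to a conjugation of A_(i+1) by A_i,
   which costs a commutator of weight k + k. *)
Lemma alternating_telescope_congr K k m (A B : nat -> G) : 0 < k -> K <= k + k ->
  (forall i, i <= m -> lcs k (A i)) -> lcs k (B 0) ->
  (forall i, i < m -> B i.+1 = A i) ->
  congr_lcs K (\prod_(0 <= i < m.+1) sgnpowg i (A i * B i)) (B 0 * sgnpowg m (A m)).
Proof.
move=> k_gt0 le_K; elim: m => [|m IHm] kA kB AB.
  by rewrite big_nat1; apply: (congr_lcs_commute (i := k) (j := k)) => //; apply: kA.
have IH : congr_lcs K (\prod_(0 <= i < m.+1) sgnpowg i (A i * B i)) (B 0 * sgnpowg m (A m)).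
  by apply: IHm => // i lt_im; [apply: kA | apply: AB]; rewrite ltnW.
rewrite big_nat_recr //= AB //; apply: congr_lcs_trans (congr_lcsM IH (congr_lcs_refl _ _)) _.
rewrite /sgnpowg /=; case: (odd m) => /=.
  rewrite -mulgA -conjgE; apply: congr_lcsM (congr_lcs_refl _ _) _.
  by apply/congr_lcs_sym/(congr_lcs_conjg (i := k) (j := k)) => //; apply: kA.
by rewrite invgM mulgA mulgK; apply: congr_lcs_refl.
Qed.

End CongruenceModuloLcs.

Section LeftNormedCommutators.

Variable G : groupType.

Definition commg_iter (i : nat) (x y : G) := iter i (commg^~ y) x.

Variables a b : G.

Local Notation c i := (commg_iter i a b).

Lemma lcs_commg_iter i : lcs i.+1 (c i).
Proof. by elim: i => [|i IHi] //; apply: lcsR. Qed.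

Lemma lcs_commg_commg_iter k i j : k <= i + j + 2 -> lcs k [~ c i, c j].
Proof.
move=> le_k; apply: (lcs_sub_leq le_k); have -> : (i + j + 2 = i.+1 + j.+1)%N by lia.
by apply: lcs_commg => //; apply: lcs_commg_iter.
Qed.

Theorem commg_iter_congr n : 0 < n ->
  congr_lcs (2 * n + 3) [~ c (2 * n), a]
    [~ \prod_(0 <= i < n) sgnpowg i [~ c (2 * n - 1 - i), c i], b].
Proof.
case: n => [|m] // _; set n := m.+1.
pose A i := [~ c (2 * n - 1 - i), c i.+1].
pose B i := [~ c (2 * n - 1 - i).+1, c i].
have B0 : B 0 = [~ c (2 * n), a] by rewrite /B subn0 (_ : (2 * n - 1).+1 = 2 * n)%N //; lia.
have Am : A m = 1 by rewrite /A (_ : 2 * n - 1 - m = m.+1)%N ?commgg //; lia.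
pose f i := sgnpowg i [~ c (2 * n - 1 - i), c i].
have distribute : congr_lcs (2 * n + 3) [~ \prod_(0 <= i < n) f i, b]
                                        (\prod_(0 <= i < n) [~ f i, b]).
  rewrite (_ : 2 * n + 3 = 2 * n + 1 + 2)%N; last lia.
  apply: commg_prod_congr; first by rewrite addn1.
  move=> i; rewrite mem_index_iota => /andP[_ lt_in].
  by apply: lcs_sgnpowg; apply: lcs_commg_commg_iter; lia.
have expand : congr_lcs (2 * n + 3) (\prod_(0 <= i < n) [~ f i, b])
                                    (\prod_(0 <= i < n) sgnpowg i (A i * B i)).
  apply: congr_lcs_prod => i; rewrite mem_index_iota => /andP[_ lt_in].
  rewrite (_ : 2 * n + 3 = (2 * n - 1 - i).+1 + i.+1 + 2)%N; last lia.
  by apply: commg_sgnpowg_leibniz => //; apply: lcs_commg_iter.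
have telescope : congr_lcs (2 * n + 3) (\prod_(0 <= i < n) sgnpowg i (A i * B i))
                                       (B 0 * sgnpowg m (A m)).
  apply: (alternating_telescope_congr (k := 2 * n + 2)); try lia.
  - by move=> i le_im; apply: lcs_commg_commg_iter; lia.
  - by apply: lcs_commg_commg_iter; lia.
  - by move=> i lt_im; rewrite /A /B (_ : (2 * n - 1 - i.+1).+1 = 2 * n - 1 - i)%N //; lia.
have tail : B 0 * sgnpowg m (A m) = [~ c (2 * n), a].
  by rewrite Am B0 /sgnpowg; case: odd; rewrite ?invg1 mulg1.
rewrite -tail; apply: congr_lcs_sym.
exact: congr_lcs_trans (congr_lcs_trans distribute expand) telescope.
Qed.

End LeftNormedCommutators.

HB.instance Definition _ := Choice.copy FG {w : seq letter | reduced w}.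

Lemma lflipK : involutive lflip.
Proof. by case=> g e; rewrite /lflip negbK. Qed.

Lemma push_lflipK l w : reduced w -> push l (push (lflip l) w) = w.
Proof.
case: w => [|y s] /=; first by rewrite eqxx.
rewrite lflipK; case: (y =P l) => [->|_] /=; last by rewrite eqxx.
by case: s => [|z s] //= /andP[/negbTE ->].
Qed.

Lemma lflip_pushK l w : reduced w -> push (lflip l) (push l w) = w.
Proof. by move=> rw; have := push_lflipK (lflip l) rw; rewrite lflipK. Qed.

Lemma mul_word_push l v w : reduced w ->
  fg_mul_word (push l v) w = push l (fg_mul_word v w).
Proof.
move=> rw; case: v => [|y s] //=.
by case: (y =P lflip l) => [->|_] //=; rewrite push_lflipK // reduced_mul.
Qed.

Lemma mul_wordA u v w : reduced w ->
  fg_mul_word (fg_mul_word u v) w = fg_mul_word u (fg_mul_word v w).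
Proof. by move=> rw; elim: u => [|l u IHu] //=; rewrite mul_word_push // IHu. Qed.

Lemma mul_word_nil u : reduced u -> fg_mul_word u [::] = u.
Proof.
elim: u => [|l u IHu] //= ru.
have ru' : reduced u by case: u ru {IHu} => [|y s] //= /andP[].
rewrite IHu //; case: u ru ru' {IHu} => [|y s] //= /andP[/negbTE ny _] _.
by rewrite ny.
Qed.

Lemma foldl_push_lflip acc u :
  foldl (fun acc l => push (lflip l) acc) acc u = fg_mul_word (map lflip (rev u)) acc.
Proof.
elim: u acc => [|l u IHu] acc //=.
by rewrite IHu rev_cons map_rcons /fg_mul_word foldr_rcons.
Qed.

Lemma mul_inv_wordK u w : reduced w ->
  fg_mul_word (map lflip (rev u)) (fg_mul_word u w) = w.
Proof.
move=> rw; elim: u => [|l u IHu] //=.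
by rewrite rev_cons map_rcons /fg_mul_word foldr_rcons /= lflip_pushK ?reduced_mul.
Qed.

Lemma fg_mulA : associative fg_mul.
Proof. by move=> x y [w rw]; apply: val_inj; rewrite /= mul_wordA. Qed.

Lemma fg_mul1g : left_id fg_one fg_mul.
Proof. by move=> x; apply: val_inj. Qed.

Lemma fg_mulg1 : right_id fg_one fg_mul.
Proof. by move=> [w rw]; apply: val_inj; rewrite /= mul_word_nil. Qed.

Lemma fg_mulVg : left_inverse fg_one fg_inv fg_mul.
Proof.
move=> [u ru]; apply: val_inj; rewrite /= /fg_inv_word foldl_push_lflip mul_wordA //=.
by rewrite -{2}(mul_word_nil ru) mul_inv_wordK.
Qed.

Lemma fg_mulgV : right_inverse fg_one fg_inv fg_mul.
Proof.
move=> x; rewrite -{1}(fg_mul1g (fg_mul x (fg_inv x))) -{1}(fg_mulVg (fg_inv x)).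
by rewrite -fg_mulA (fg_mulA (fg_inv x) x) fg_mulVg fg_mul1g fg_mulVg.
Qed.

HB.instance Definition _ := isGroup.Build FG fg_mulA fg_mul1g fg_mulg1 fg_mulVg fg_mulgV.

Lemma fg_gen_generated (P Q : FG -> Prop) x :
  (forall z, P z -> Q z) -> fg_gen P x -> generated Q x.
Proof. by move=> PQ; elim=> *; constructor; auto. Qed.

Lemma generated_fg_gen (P Q : FG -> Prop) x :
  (forall z, P z -> Q z) -> generated P x -> fg_gen Q x.
Proof. by move=> PQ; elim=> *; constructor; auto. Qed.

Lemma fg_gammaE k x : fg_gamma k x <-> lcs k x.
Proof.
elim: k x => [|[|k] IHk] x //; split.
  by apply: fg_gen_generated => _ [y [z [ky ->]]]; exists y, z; split; first exact/IHk.
by apply: generated_fg_gen => _ [y [z [ky ->]]]; exists y, z; split; first exact/IHk.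
Qed.

Lemma fg_prodE n (f : nat -> FG) : fg_prod n f = \prod_(0 <= i < n) f i.
Proof. by rewrite unlock /reducebig /index_iota subn0. Qed.

Theorem corollary4p1 (n : nat) (hn : 1 <= n) :
  fg_congr (2 * n + 3)
    (fg_comm (fg_citer (2 * n) fg_a fg_b) fg_a)
    (fg_comm
       (fg_prod n (fun i =>
          fg_sgnpow i (fg_comm (fg_citer (2 * n - 1 - i) fg_a fg_b)
                               (fg_citer i fg_a fg_b))))
       fg_b).
Proof. by apply/fg_gammaE; rewrite fg_prodE; apply: commg_iter_congr. Qed.
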